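(* For every integer $n\ge 0$, $$e(n+1)=\max\{\nu(n-i)-\nu(i): i=0,1,\dots,n\},\qquad -e(n+1)=\min\{\nu(n-i)-\nu(i): i=0,1,\dots,n\}.$$
   Context: The Stern polynomials $B_n(t)\in\mathbb{Z}[t]$, $n\ge 0$, are defined by $B_0(t)=0$, $B_1(t)=1$, $B_{2n}(t)=tB_n(t)$ and $B_{2n+1}(t)=B_n(t)+B_{n+1}(t)$ for $n\ge 1$. For $n\ge 1$, $e(n)=\deg_t B_n(t)$. For $n\ge 0$, $\nu(n)$ denotes the number of digits $1$ in the binary representation of $n$. *)

From HB Require Import structures.
From mathcomp Require Import all_boot all_order all_algebra.
Set Implicit Arguments. Unset Strict Implicit. Unset Printing Implicit Defensive.
Import Order.TTheory GRing.Theory Num.Theory.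
Local Open Scope ring_scope.

(* Stern polynomials, computed with fuel k (k > n suffices). *)
Fixpoint stern_fuel (k n : nat) : {poly int} :=
  match k with
  | 0%N => 0
  | k'.+1 =>
    match n with
    | 0%N => 0
    | 1%N => 1
    | _ => if odd n then stern_fuel k' n./2 + stern_fuel k' (n./2).+1
           else 'X * stern_fuel k' n./2
    end
  end.

Definition stern (n : nat) : {poly int} := stern_fuel n.+1 n.

(* e(n) = deg_t B_n(t) (used for n >= 1, where B_n <> 0) *)
Definition e (n : nat) : nat := (size (stern n)).-1.

Fixpoint nu_fuel (k n : nat) : nat :=
  match k with
  | 0%N => 0%N
  | k'.+1 => if n == 0%N then 0%N else (odd n + nu_fuel k' n./2)%N
  end.
Definition nu (n : nat) : nat := nu_fuel n n.

From mathcomp Require Import all_boot all_order all_algebra.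
From mathcomp Require Import zify.
Import Order.TTheory GRing.Theory Num.Theory.
Local Open Scope ring_scope.

(* Both sides obey the same binary recursion.  On the Stern side,
   B_{2m} = t B_m and B_{2m+1} = B_m + B_{m+1}; all B_m (m >= 1) have positive
   leading coefficient, so no cancellation occurs in the sum and
     e(2m) = e(m) + 1,   e(2m+1) = max (e m) (e (m+1)).
   On the digit side, nu(2m) = nu(m) and nu(2m+1) = nu(m) + 1.  Calling k the
   "maximal spread" of n when k = max_{i <= n} (nu(n-i) - nu(i)), splitting i
   and n - i by parity shows that the maximal spread of 2m+1 is that of m plus
   one, and the maximal spread of 2m+2 is the larger of those of m and m+1.
   Hence, by strong induction, the maximal spread of n is e(n+1).  The minimum
   statement follows by the symmetry i |-> n - i of the range 0..n. *)

Lemma even_or_odd (i : nat) : exists j, i = (2 * j)%N \/ i = (2 * j + 1)%N.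
Proof.
exists i./2; have := odd_double_half i.
by case: (odd i) => /= hi; [right | left]; lia.
Qed.

Lemma nu_fuelE (k1 k2 n : nat) :
  (n <= k1)%N -> (n <= k2)%N -> nu_fuel k1 n = nu_fuel k2 n.
Proof.
elim: k1 k2 n => [|k1 IH] [|k2] n h1 h2 //=.
- by move: h1; rewrite leqn0 => /eqP ->.
- by move: h2; rewrite leqn0 => /eqP ->.
have := odd_double_half n.
by case: eqP => // /eqP n0 hn; congr (_ + _)%N; apply: IH; lia.
Qed.

Lemma nu_rec (n : nat) : (0 < n)%N -> nu n = (odd n + nu n./2)%N.
Proof.
case: n => // n _; rewrite /nu /=; congr (_ + _)%N; apply: nu_fuelE => //.
have := odd_double_half n.+1; lia.
Qed.

Lemma nu_double (m : nat) : nu (2 * m) = nu m.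
Proof.
case: m => // m; rewrite nu_rec ?muln_gt0 //.
by rewrite mul2n odd_double doubleK.
Qed.

Lemma nu_doubleS (m : nat) : nu (2 * m + 1) = (nu m + 1)%N.
Proof.
rewrite nu_rec ?addn1 // oddS oddM /= mul2n uphalf_double; lia.
Qed.

Lemma stern_fuelE (k1 k2 n : nat) :
  (n < k1)%N -> (n < k2)%N -> stern_fuel k1 n = stern_fuel k2 n.
Proof.
elim: k1 k2 n => [|k1 IH] [|k2] n h1 h2 //=.
case: n h1 h2 => [|[|n]] h1 h2 //.
have := odd_double_half n; case: ifP => n_odd hn.
  by rewrite (IH k2) ?(IH k2 n./2.+2) //; lia.
by rewrite (IH k2) //; lia.
Qed.

Lemma stern_rec (n : nat) : (2 <= n)%N ->
  stern n = if odd n then stern n./2 + stern n./2.+1 else 'X * stern n./2.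
Proof.
case: n => [|[|n]] // _.
have -> : stern n.+2 = if odd n then stern_fuel n.+2 n./2.+1 + stern_fuel n.+2 n./2.+2
                       else 'X * stern_fuel n.+2 n./2.+1 by rewrite /stern /= negbK.
rewrite [odd n.+2]/= negbK [n.+2./2]/= /stern.
have := odd_double_half n; case: ifP => n_odd hn.
  by rewrite (stern_fuelE n.+2 n./2.+2) ?(stern_fuelE n.+2 n./2.+3) //; lia.
by rewrite (stern_fuelE n.+2 n./2.+2) //; lia.
Qed.

Lemma stern_double (m : nat) : (0 < m)%N -> stern (2 * m) = 'X * stern m.
Proof.
by move=> m_gt0; rewrite stern_rec ?mul2n ?odd_double ?doubleK //; lia.
Qed.

Lemma stern_doubleS (m : nat) :
  (0 < m)%N -> stern (2 * m + 1) = stern m + stern m.+1.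
Proof.
move=> m_gt0; rewrite stern_rec; last lia.
by rewrite addn1 mul2n oddS odd_double [_.+1./2]/= uphalf_double.
Qed.

(* Adding two polynomials with positive leading coefficients over an ordered
   domain cannot cancel the top term: the result has positive leading
   coefficient and the larger of the two sizes. *)
Lemma lead_coef_pos_add {R : numDomainType} {p q : {poly R}} :
  0 < lead_coef p -> 0 < lead_coef q ->
  0 < lead_coef (p + q) /\ size (p + q) = maxn (size p) (size q).
Proof.
move=> hp hq; case: (ltngtP (size p) (size q)) => hpq.
- by rewrite lead_coefDr // addrC size_polyDl // (maxn_idPr (ltnW hpq)).
- by rewrite lead_coefDl // size_polyDl // (maxn_idPl (ltnW hpq)).
have p_neq0 : p != 0 by rewrite -lead_coef_eq0 gt_eqF.
have top : (p + q)`_(size p).-1 = lead_coef p + lead_coef q.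
  by rewrite coefD /lead_coef hpq.
have top_gt0 : 0 < lead_coef p + lead_coef q by exact: addr_gt0.
have size_sum : size (p + q) = size p.
  apply/eqP; rewrite eqn_leq; apply/andP; split.
    by have := size_polyD p q; rewrite -hpq maxnn.
  rewrite (polySpred p_neq0) ltnNge; apply/negP => /leq_sizeP /(_ _ (leqnn _)).
  by rewrite top => /eqP; rewrite gt_eqF.
by rewrite /lead_coef size_sum top.
Qed.

Lemma stern_lead_coef_gt0 {n : nat} : (0 < n)%N -> 0 < lead_coef (stern n).
Proof.
elim/ltn_ind: n => n IH n_gt0.
have [-> | n_ge2] : n = 1%N \/ (2 <= n)%N by lia.
  by rewrite /stern /= lead_coef1.
have [m [n_even | n_odd]] := even_or_odd n; subst n.
  have m_gt0 : (0 < m)%N by lia.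
  by rewrite stern_double // mulrC lead_coefMX; apply: IH; lia.
have m_gt0 : (0 < m)%N by lia.
have m_lt : (m < 2 * m + 1)%N by lia.
have m1_lt : (m.+1 < 2 * m + 1)%N by lia.
rewrite stern_doubleS //.
exact: proj1 (lead_coef_pos_add (IH m m_lt m_gt0) (IH m.+1 m1_lt isT)).
Qed.

Lemma stern_neq0 {n : nat} : (0 < n)%N -> stern n != 0.
Proof. by move/stern_lead_coef_gt0; rewrite -lead_coef_eq0 => /gt_eqF ->. Qed.

Lemma e_double (m : nat) : (0 < m)%N -> e (2 * m) = (e m).+1.
Proof.
move=> m_gt0; rewrite /e stern_double // mulrC size_mulX ?stern_neq0 //.
by rewrite (polySpred (stern_neq0 m_gt0)).
Qed.

(* Degree recursion: e(2m+1) = max (e m) (e (m+1)), as no cancellation occurs. *)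
Lemma e_doubleS (m : nat) : (0 < m)%N -> e (2 * m + 1) = maxn (e m) (e m.+1).
Proof.
move=> m_gt0; have m1_gt0 : (0 < m.+1)%N by [].
rewrite /e stern_doubleS //.
rewrite (proj2 (lead_coef_pos_add (stern_lead_coef_gt0 m_gt0)
                                  (stern_lead_coef_gt0 m1_gt0))).
by rewrite (polySpred (stern_neq0 m_gt0)) (polySpred (stern_neq0 m1_gt0)) maxnSS.
Qed.

Lemma e1 : e 1 = 0%N. Proof. by rewrite /e /stern /= size_poly1. Qed.

(* k is the maximal spread of n: k = max_{0 <= i <= n} (nu(n-i) - nu(i)),
   stated in nat as a bound that is attained. *)
Definition max_spread (n k : nat) : Prop :=
  (forall i, (i <= n)%N -> (nu (n - i) <= nu i + k)%N) /\
  exists2 i, (i <= n)%N & nu (n - i) = (nu i + k)%N.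

Lemma max_spread0 : max_spread 0 0.
Proof. by split; [move=> i; rewrite leqn0 => /eqP -> | exists 0%N]. Qed.

Lemma max_spread_doubleS (m k : nat) :
  max_spread m k -> max_spread (2 * m + 1) k.+1.
Proof.
move=> [bound [j j_le attained]]; split.
  move=> i; have [i' [-> | ->]] := even_or_odd i => i_le.
    have -> : (2 * m + 1 - 2 * i' = 2 * (m - i') + 1)%N by lia.
    rewrite nu_double nu_doubleS; have := bound i'; lia.
  have -> : (2 * m + 1 - (2 * i' + 1) = 2 * (m - i'))%N by lia.
  rewrite nu_double nu_doubleS; have := bound i'; lia.
exists (2 * j)%N; first lia.
have -> : (2 * m + 1 - 2 * j = 2 * (m - j) + 1)%N by lia.
rewrite nu_double nu_doubleS attained; lia.
Qed.

Lemma max_spread_double (m k k' : nat) :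
  max_spread m k -> max_spread m.+1 k' -> max_spread (2 * m.+1) (maxn k k').
Proof.
move=> [bound [j j_le attained]] [bound' [j' j'_le attained']]; split.
  move=> i; have [i' [-> | ->]] := even_or_odd i => i_le.
    have -> : (2 * m.+1 - 2 * i' = 2 * (m.+1 - i'))%N by lia.
    rewrite !nu_double; have := bound' i'; lia.
  have -> : (2 * m.+1 - (2 * i' + 1) = 2 * (m - i') + 1)%N by lia.
  rewrite !nu_doubleS; have := bound i'; lia.
case: (leqP k k') => k_le.
  exists (2 * j')%N; first lia.
  have -> : (2 * m.+1 - 2 * j' = 2 * (m.+1 - j'))%N by lia.
  rewrite !nu_double attained'; lia.
exists (2 * j + 1)%N; first lia.
have -> : (2 * m.+1 - (2 * j + 1) = 2 * (m - j) + 1)%N by lia.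
rewrite !nu_doubleS attained; lia.
Qed.

Lemma max_spread_e (n : nat) : max_spread n (e n.+1).
Proof.
elim/ltn_ind: n => n IH.
have [m [n_even | n_odd]] := even_or_odd n; subst n.
  case: m IH => [|m] IH; first by rewrite e1; exact: max_spread0.
  rewrite -[(2 * m.+1).+1]addn1 e_doubleS //.
  by apply: max_spread_double; apply: IH; lia.
have -> : (2 * m + 1).+1 = (2 * m.+1)%N by lia.
rewrite e_double //.
by apply: max_spread_doubleS; apply: IH; lia.
Qed.

Theorem corollary3p8 (n : nat) :
  ((forall i : nat, (i <= n)%N -> (nu (n - i))%:Z - (nu i)%:Z <= (e n.+1)%:Z) /\
   (exists2 i : nat, (i <= n)%N & (nu (n - i))%:Z - (nu i)%:Z = (e n.+1)%:Z)) /\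
  ((forall i : nat, (i <= n)%N -> - (e n.+1)%:Z <= (nu (n - i))%:Z - (nu i)%:Z) /\
   (exists2 i : nat, (i <= n)%N & (nu (n - i))%:Z - (nu i)%:Z = - (e n.+1)%:Z)).
Proof.
have [bound [j j_le attained]] := max_spread_e n.
(* The minimum comes from the maximum through the symmetry i |-> n - i. *)
split; split.
- by move=> i /bound; lia.
- by exists j => //; rewrite attained; lia.
- by move=> i i_le; have := bound (n - i)%N (leq_subr _ _); rewrite subKn //; lia.
- exists (n - j)%N; first exact: leq_subr.
  by rewrite subKn // attained; lia.
Qed.
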